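(* Multistage Vertex Cover restricted to instances in which each layer is planar and $\ell\ge 2k$, parameterized by $k$, admits an AND-composition.
   Context: A temporal graph $\mathcal{G}$ is a sequence of layers (static graphs) $(G_1,\dots,G_\tau)$ on a common vertex set $V$. Multistage Vertex Cover: given $\mathcal{G}$ and integers $k\in\mathbb{N}$, $\ell\in\mathbb{N}_0$, decide whether there is $(S_1,\dots,S_\tau)$ with each $S_i\subseteq V$ a vertex cover of $G_i$ of size at most $k$ and $|S_i\triangle S_{i+1}|\le\ell$ for all $i<\tau$ ($\triangle$ = symmetric difference). An AND-composition for a parameterized problem $L$ is an algorithm that, given $p$ instances $(x_1,k),\dots,(x_p,k)$ of $L$ (all with the same parameter $k$), computes in time polynomial in $\sum_{i=1}^p|x_i|$ an instance $(y,k')$ of $L$ such that (i) $(y,k')\in L$ if and only if $(x_i,k)\in L$ for all $i\in\{1,\dots,p\}$, and (ii) $k'$ is polynomially upper-bounded in $k$. *)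

From Stdlib Require Import Reals.
From mathcomp Require Import all_boot.

Set Implicit Arguments.
Unset Strict Implicit.
Unset Printing Implicit Defensive.

Local Open Scope nat_scope.

(* The vertex set is V = {0, ..., nverts - 1}; the temporal graph is the     *)
(* sequence of layers G_1, ..., G_tau, each layer given by its edge list.    *)
Record mvc_instance := MVC {
  nverts : nat;
  layers : seq (seq (nat * nat));
  kpar : nat;
  lpar : nat }.

Definition mvc_wf (x : mvc_instance) : Prop :=
  forall L, L \in layers x -> forall e, e \in L ->
    [/\ e.1 < nverts x, e.2 < nverts x & e.1 != e.2].

Definition is_vertex_cover (n : nat) (L : seq (nat * nat)) (S : {set 'I_n}) : Prop :=
  forall e, e \in L -> exists2 w, w \in S & (val w == e.1) || (val w == e.2).

Definition symdiff (T : finType) (A B : {set T}) : {set T} := (A :\: B) :|: (B :\: A).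

Definition mvc_yes (x : mvc_instance) : Prop :=
  exists S : seq {set 'I_(nverts x)},
    [/\ size S = size (layers x),
        (forall i, i < size (layers x) ->
           is_vertex_cover (nth [::] (layers x) i) (nth set0 S i)
           /\ #|nth set0 S i| <= kpar x)
      & (forall i, i.+1 < size (layers x) ->
           #|symdiff (nth set0 S i) (nth set0 S i.+1)| <= lpar x)].

(* Planarity: a drawing in R^2 with distinct points for the vertices and     *)
(* Jordan arcs (continuous, injective on [0,1]) for the edges, arcs meeting  *)
(* only in common endpoints and not passing through other vertices.          *)
(* The arc of edge {u,v} is indexed by (minn u v, maxn u v).                  *)
Definition in01 (s : R) : Prop := Rle 0 s /\ Rle s 1.

Definition planar (n : nat) (E : seq (nat * nat)) : Prop :=
  exists (px py : nat -> R) (ax ay : nat -> nat -> R -> R),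
  (forall u v, u < n -> v < n -> px u = px v -> py u = py v -> u = v) /\
  (forall e, e \in E ->
     let a := minn e.1 e.2 in let b := maxn e.1 e.2 in
     [/\ continuity (ax a b) /\ continuity (ay a b),
         (ax a b R0 = px a /\ ay a b R0 = py a) /\
         (ax a b R1 = px b /\ ay a b R1 = py b),
         (forall s t, in01 s -> in01 t ->
            ax a b s = ax a b t -> ay a b s = ay a b t -> s = t),
         (forall w s, w < n -> w <> a -> w <> b -> in01 s ->
            ~ (ax a b s = px w /\ ay a b s = py w))
       & (forall e', e' \in E ->
            let a' := minn e'.1 e'.2 in let b' := maxn e'.1 e'.2 in
            (a, b) <> (a', b') ->
            forall s t, in01 s -> in01 t ->
              ax a b s = ax a' b' t -> ay a b s = ay a' b' t ->
              exists w, [/\ w = a \/ w = b, w = a' \/ w = b' &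
                            ax a b s = px w /\ ay a b s = py w])]).

Definition restricted_instance (x : mvc_instance) : Prop :=
  [/\ mvc_wf x, (forall L, L \in layers x -> planar (nverts x) L)
    & 2 * kpar x <= lpar x].

Definition AND_composition (f : seq mvc_instance -> mvc_instance) : Prop :=
  exists c : nat,
  forall (xs : seq mvc_instance) (k : nat),
    0 < size xs ->
    (forall x, List.In x xs -> restricted_instance x /\ kpar x = k) ->
    [/\ restricted_instance (f xs),
        (mvc_yes (f xs) <-> (forall x, List.In x xs -> mvc_yes x))
      & kpar (f xs) <= c * k ^ c + c].

(* Polynomial-time computability, axiomatized: PT A B f is meant to say that *)
(* f : A -> B is polynomial-time computable w.r.t. standard encodings.       *)
(* We only assume closure properties that the class of polynomial-time       *)
(* computable functions satisfies.                  *)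
Record poly_time_class (PT : forall A B : Type, (A -> B) -> Prop) : Prop := {
  pt_id : forall A, PT A A (fun x => x);
  pt_comp : forall A B C (f : A -> B) (g : B -> C),
      PT A B f -> PT B C g -> PT A C (fun x => g (f x));
  pt_pair : forall A B C (f : A -> B) (g : A -> C),
      PT A B f -> PT A C g -> PT A (B * C)%type (fun x => (f x, g x));
  pt_fst : forall A B, PT (A * B)%type A fst;
  pt_snd : forall A B, PT (A * B)%type B snd;
  pt_const : forall A B (b : B), PT A B (fun _ => b);
  pt_add : PT (nat * nat)%type nat (fun p => p.1 + p.2);
  pt_mul : PT (nat * nat)%type nat (fun p => p.1 * p.2);
  pt_max : PT (nat * nat)%type nat (fun p => maxn p.1 p.2);
  pt_sumn : PT (seq nat) nat sumn;
  pt_maxlist : PT (seq nat) nat (foldr maxn 0);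
  pt_map : forall A B (f : A -> B), PT A B f -> PT (seq A) (seq B) (map f);
  pt_flatten : forall A, PT (seq (seq A)) (seq A) (@flatten A);
  pt_cat : forall A, PT (seq A * seq A)%type (seq A) (fun p => p.1 ++ p.2);
  pt_head : forall A (a : A), PT (seq A) A (head a);
  pt_mk : PT (nat * seq (seq (nat * nat)) * nat * nat)%type mvc_instance
             (fun q => MVC q.1.1.1 q.1.1.2 q.1.2 q.2);
  pt_nverts : PT mvc_instance nat nverts;
  pt_layers : PT mvc_instance (seq (seq (nat * nat))) layers;
  pt_kpar : PT mvc_instance nat kpar;
  pt_lpar : PT mvc_instance nat lpar }.

(* When l >= 2k the switching constraint is void: two covers of size at most k
   differ in at most 2k vertices.  A restricted instance is therefore a yes-instance
   iff each of its layers, taken alone, has a vertex cover of size at most k.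
   The composition concatenates the layer sequences of all instances on the largest
   vertex set, keeping k and setting l = 2k.  Vertex covers do not see the added
   isolated vertices, and neither does planarity: squeeze a drawing into a bounded
   box with atan and place the new vertices on a horizontal ray outside of it. *)

From Stdlib Require Import Reals Lra.
From mathcomp Require Import all_boot.

Set Implicit Arguments.
Unset Strict Implicit.
Unset Printing Implicit Defensive.

Local Open Scope nat_scope.

Definition has_vc (n : nat) (L : seq (nat * nat)) (k : nat) : Prop :=
  exists2 S : {set 'I_n}, is_vertex_cover L S & #|S| <= k.

Definition edges_within (n : nat) (L : seq (nat * nat)) : Prop :=
  forall e, e \in L -> e.1 < n /\ e.2 < n.

Lemma mvc_wf_edges_within (x : mvc_instance) L :
  mvc_wf x -> L \in layers x -> edges_within (nverts x) L.
Proof. by move=> wf_x xL e eL; have [] := wf_x L xL e eL. Qed.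

Lemma edges_within_leq (n m : nat) L :
  n <= m -> edges_within n L -> edges_within m L.
Proof.
by move=> le_nm inL e /inL[e1 e2]; split; apply: leq_trans le_nm.
Qed.

Lemma leq_card_symdiff (T : finType) (A B : {set T}) :
  #|symdiff A B| <= #|A| + #|B|.
Proof.
apply: leq_trans (leq_card_setU _ _) _.
by apply: leq_add; apply/subset_leq_card/subsetDl.
Qed.

Lemma seq_choice (T : eqType) (U : Type) (t0 : T) (u0 : U)
    (P : T -> U -> Prop) (s : seq T) :
  (forall t, t \in s -> exists u, P t u) ->
  exists us : seq U, size us = size s /\
    forall i, i < size s -> P (nth t0 s i) (nth u0 us i).
Proof.
elim: s => [|t s IHs] exP; first by exists [::].
have [u Ptu] := exP t (mem_head _ _).
have [|us [size_us Pus]] := IHs; first by move=> t' st'; apply/exP/mem_behead.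
exists (u :: us); split=> [|[|i] //= lt_i]; [by rewrite /= size_us | exact: Pus].
Qed.

Lemma mvc_yes_layerwise (x : mvc_instance) :
  2 * kpar x <= lpar x ->
  mvc_yes x <-> forall L, L \in layers x -> has_vc (nverts x) L (kpar x).
Proof.
move=> le_2k_l; split.
  move=> [S [_ coverS _]] L xL.
  have [] := coverS (index L (layers x)); first by rewrite index_mem.
  by rewrite nth_index //; exists (nth set0 S (index L (layers x))).
move=> vcL; have [|S [size_S coverS]] := seq_choice [::] set0 (s := layers x)
    (P := fun L (S : {set 'I_(nverts x)}) => is_vertex_cover L S /\ #|S| <= kpar x).
  by move=> L /vcL[S]; exists S.
exists S; split=> // i lt_i1; apply: leq_trans (leq_card_symdiff _ _) _.
have [_ cardSi] := coverS i (ltnW lt_i1); have [_ cardSi1] := coverS i.+1 lt_i1.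
by apply: leq_trans le_2k_l; rewrite mul2n -addnn leq_add.
Qed.

Lemma card_ord_mem_leq (n : nat) (s : seq nat) :
  #|[set i : 'I_n | val i \in s]| <= size s.
Proof.
rewrite cardE -(size_map val); apply: uniq_leq_size.
  by rewrite map_inj_uniq ?enum_uniq //; apply: val_inj.
by move=> j /mapP[i]; rewrite mem_enum inE => si ->.
Qed.

Lemma has_vc_resize (n m : nat) L k :
  edges_within n L -> has_vc m L k -> has_vc n L k.
Proof.
move=> inL [S coverS cardS].
exists [set i : 'I_n | val i \in [seq val j | j in S]]; last first.
  by apply: leq_trans (card_ord_mem_leq _ _) _; rewrite size_image.
move=> e eL; have [w Sw we] := coverS e eL; have [e1 e2] := inL e eL.
have lt_wn : val w < n by case/orP: we => /eqP->.
by exists (Ordinal lt_wn); rewrite // inE; apply: image_f.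
Qed.

Lemma atan_inj : injective atan.
Proof. by move=> a b eq_ab; rewrite -(tan_atan a) eq_ab tan_atan. Qed.

Lemma continuity_atan : continuity atan.
Proof. by move=> z; apply/derivable_continuous_pt/derivable_pt_atan. Qed.

Lemma atan_lt_INR_add2 (a : R) (w : nat) : Rlt (atan a) (Rplus (INR w) (IZR 2)).
Proof. have [_ ?] := atan_bound a; have := PI_4; have := pos_INR w; lra. Qed.

Lemma planar_add_isolated (n m : nat) L :
  edges_within n L -> planar n L -> planar m L.
Proof.
move=> inL [px [py [ax [ay [inj_p drawL]]]]].
exists (fun u => if u < n then atan (px u) else Rplus (INR u) (IZR 2)).
exists (fun u => if u < n then atan (py u) else IZR 0).
exists (fun a b s => atan (ax a b s)), (fun a b s => atan (ay a b s)).
split=> [u v _ _|e eL].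
  case: ifP => un; case: ifP => vn.
  - by move=> /atan_inj ? /atan_inj ?; apply: inj_p.
  - by move=> eq_uv; have := atan_lt_INR_add2 (px u) v; lra.
  - by move=> eq_uv; have := atan_lt_INR_add2 (px v) u; lra.
  - by move=> eq_uv _; apply: INR_eq; lra.
have [e1 e2] := inL e eL.
have mine : minn e.1 e.2 < n by rewrite gtn_min e1.
have maxe : maxn e.1 e.2 < n by rewrite gtn_max e1 e2.
have [[cx cy] [[x0 y0] [x1 y1]] inj_a off_a cross_a] := drawL e eL.
split=> /=.
- by split; apply: continuity_comp continuity_atan.
- by rewrite mine maxe x0 y0 x1 y1.
- by move=> s t s01 t01 /atan_inj ? /atan_inj ?; apply: inj_a.
- move=> w s _ wa wb s01; case: ifP => wn.
    by move=> [/atan_inj ? /atan_inj ?]; apply: (off_a w s).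
  move=> [eq_x _]; have := atan_lt_INR_add2 (ax (minn e.1 e.2) (maxn e.1 e.2) s) w.
  by rewrite eq_x; apply: Rlt_irrefl.
- move=> e' e'L ne s t s01 t01 /atan_inj eq_x /atan_inj eq_y.
  have [w [wa wa' [xw yw]]] := cross_a e' e'L ne s t s01 t01 eq_x eq_y.
  have wn : w < n by case: wa => ->.
  by exists w; rewrite wn xw yw.
Qed.

Lemma leq_foldr_maxn (T : Type) (f : T -> nat) (s : seq T) x :
  List.In x s -> f x <= foldr maxn 0 (map f s).
Proof.
elim: s => [|y s IHs] //= [<-|sx]; first exact: leq_maxl.
exact: leq_trans (IHs sx) (leq_maxr _ _).
Qed.

Definition mvc_nil : mvc_instance := MVC 0 [::] 0 0.

Definition mvc_compose (xs : seq mvc_instance) : mvc_instance :=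
  MVC (foldr maxn 0 (map nverts xs)) (flatten (map layers xs))
      (kpar (head mvc_nil xs)) (2 * kpar (head mvc_nil xs)).

Lemma mvc_compose_poly_time (PT : forall A B : Type, (A -> B) -> Prop) :
  poly_time_class PT -> PT (seq mvc_instance) mvc_instance mvc_compose.
Proof.
move=> P.
have ptn := pt_comp P (pt_map P (pt_nverts P)) (pt_maxlist P).
have ptL := pt_comp P (pt_map P (pt_layers P)) (pt_flatten P _).
have ptk := pt_comp P (pt_head P mvc_nil) (pt_kpar P).
have ptl := pt_comp P (pt_pair P (pt_const P _ 2) ptk) (pt_mul P).
exact (pt_comp P (pt_pair P (pt_pair P (pt_pair P ptn ptL) ptk) ptl) (pt_mk P)).
Qed.

Lemma mem_layers_compose (xs : seq mvc_instance) L :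
  L \in layers (mvc_compose xs) <-> exists2 x, List.In x xs & L \in layers x.
Proof.
elim: xs => [|x xs IHs] /=; first by split=> // [[]].
rewrite mem_cat; split=> [/orP[xL|/IHs[y]]|[y [<-|xsy] yL]].
- by exists x; first left.
- by exists y; first right.
- by rewrite yL.
- by apply/orP; right; apply/IHs; exists y.
Qed.

Lemma kpar_compose (xs : seq mvc_instance) k :
  0 < size xs -> (forall x, List.In x xs -> kpar x = k) ->
  kpar (mvc_compose xs) = k.
Proof. by case: xs => // x xs _ /(_ x (or_introl erefl)). Qed.

Lemma mvc_compose_edges_within (xs : seq mvc_instance) x L :
  (forall x, List.In x xs -> mvc_wf x) -> List.In x xs -> L \in layers x ->
  edges_within (nverts (mvc_compose xs)) L.
Proof.
move=> wf_xs xsx xL; apply: edges_within_leq (leq_foldr_maxn _ xsx) _.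
exact: mvc_wf_edges_within (wf_xs x xsx) xL.
Qed.

Lemma mvc_compose_restricted (xs : seq mvc_instance) :
  (forall x, List.In x xs -> restricted_instance x) ->
  restricted_instance (mvc_compose xs).
Proof.
move=> rxs; have wf_xs x (xsx : List.In x xs) : mvc_wf x by have [] := rxs x xsx.
split=> // [L /mem_layers_compose[x xsx xL]|L /mem_layers_compose[x xsx xL]].
  move=> e eL; have [e1 e2] := mvc_compose_edges_within wf_xs xsx xL eL.
  by split=> //; have [] := wf_xs x xsx L xL e eL.
have [_ planar_x _] := rxs x xsx.
exact: planar_add_isolated (mvc_wf_edges_within (wf_xs x xsx) xL) (planar_x L xL).
Qed.

Lemma mvc_compose_yes (xs : seq mvc_instance) k :
  0 < size xs -> (forall x, List.In x xs -> restricted_instance x /\ kpar x = k) ->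
  mvc_yes (mvc_compose xs) <-> forall x, List.In x xs -> mvc_yes x.
Proof.
move=> xs_gt0 rxs.
have wf_xs x (xsx : List.In x xs) : mvc_wf x by have [[]] := rxs x xsx.
have k_compose : kpar (mvc_compose xs) = k.
  by apply: kpar_compose => // x /rxs[].
rewrite mvc_yes_layerwise // k_compose; split=> [vc_xs x xsx|yes_xs L].
  have [[_ _ le_2k_l] kx] := rxs x xsx.
  apply/mvc_yes_layerwise => // L xL; rewrite kx.
  apply: has_vc_resize (mvc_wf_edges_within (wf_xs x xsx) xL) _.
  by apply: vc_xs; apply/mem_layers_compose; exists x.
move=> /mem_layers_compose[x xsx xL]; have [[_ _ le_2k_l] kx] := rxs x xsx.
apply: has_vc_resize (mvc_compose_edges_within wf_xs xsx xL) _.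
by rewrite -kx; apply: (mvc_yes_layerwise le_2k_l).1 (yes_xs x xsx) L xL.
Qed.

Theorem proposition37 :
  forall PT : forall A B : Type, (A -> B) -> Prop,
    poly_time_class PT ->
    exists f : seq mvc_instance -> mvc_instance,
      PT (seq mvc_instance) mvc_instance f /\ AND_composition f.
Proof.
move=> PT P; exists mvc_compose; split; first exact: mvc_compose_poly_time.
exists 1 => xs k xs_gt0 rxs; split.
- by apply: mvc_compose_restricted => x /rxs[].
- exact: mvc_compose_yes xs_gt0 rxs.
- have -> : kpar (mvc_compose xs) = k by apply: kpar_compose => // x /rxs[].
  by rewrite expn1 mul1n leq_addr.
Qed.
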